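(* Let $g(t)$, $t\in[0,T)$, be the maximal Ricci flow solution on $S^1\times S^3$ of the form $g(t)=\phi^2dz^2+a^2\omega^1\otimes\omega^1+b^2\omega^2\otimes\omega^2+c^2\omega^3\otimes\omega^3$. Suppose that $a\le b\le c\le\lambda a$ for some $1<\lambda<2$ at time $t=0$. Then for all $(s,t)\in S^1\times[0,T)$ there exist constants $C_1(\lambda),C_2(\lambda),C_3(\lambda)>0$ such that $$|a'(s,t)|\le C_1(\lambda)\le\max\left(\tfrac{280\sqrt3}{9},\max_s|a'(s,0)|\right),$$ $$|b'(s,t)|\le C_2(\lambda)\le\max\left(\tfrac{4\sqrt{57}}{3},\max_s|b'(s,0)|\right),$$ $$|c'(s,t)|\le C_3(\lambda)\le\max\left(\tfrac{10\sqrt{93}}{9},\max_s|c'(s,0)|\right).$$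
   Context: $S^3=SU(2)$ carries a global left-invariant frame $E_1,E_2,E_3$ with $[E_i,E_j]=-2\epsilon_{ijk}E_k$ and dual coframe $\omega^i$; $z\in S^1=[0,2\pi)$, $\phi,a,b,c$ positive smooth $2\pi$-periodic functions; $s$ is the arclength coordinate $ds=\phi\,dz$ and $'$ denotes $\partial_s$. The Ricci flow $\partial_tg=-2\mathrm{Ric}(g)$ preserves this form. *)

From Stdlib Require Import Reals Lra List.
From Coquelicot Require Import Coquelicot.
Open Scope R_scope.

(* Functions of (z,t) with z in R (2pi-periodic, i.e. on S^1) and t time. *)

Definition pz (f : R -> R -> R) : R -> R -> R :=
  fun z t => Derive (fun z' => f z' t) z.
Definition pt (f : R -> R -> R) : R -> R -> R :=
  fun z t => Derive (fun t' => f z t') t.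

Fixpoint iterD (l : list bool) (f : R -> R -> R) : R -> R -> R :=
  match l with
  | nil => f
  | true :: l' => pz (iterD l' f)
  | false :: l' => pt (iterD l' f)
  end.

(* C^infinity on a set P of R^2: all iterated partial derivatives exist and
   are jointly continuous at every point of P (P is taken open below). *)
Definition smooth_on (P : R -> R -> Prop) (f : R -> R -> R) : Prop :=
  forall (l : list bool) (z t : R), P z t ->
    ex_derive (fun z' => iterD l f z' t) z /\
    ex_derive (fun t' => iterD l f z t') t /\
    continuous (fun p : R * R => iterD l f (fst p) (snd p)) (z, t).

(* Arclength derivative ' = d/ds = (1/phi) d/dz. *)
Definition ds (phi f : R -> R -> R) : R -> R -> R :=
  fun z t => pz f z t / phi z t.
Definition dss (phi f : R -> R -> R) : R -> R -> R := ds phi (ds phi f).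

(* Ricci flow d/dt g = -2 Ric for g = phi^2 dz^2 + a^2 w1^2 + b^2 w2^2 + c^2 w3^2
   on S^1 x SU(2), [E_i,E_j] = -2 eps_ijk E_k, written in components
   (orthonormal frame d/ds, E1/a, E2/b, E3/c; off-diagonal Ricci vanishes):
     Ric(d_s,d_s) = -(a''/a + b''/b + c''/c)
     Ric(e1,e1)   = -a''/a - (a'/a)(b'/b + c'/c) + 2(a^4-(b^2-c^2)^2)/(a^2 b^2 c^2)
   and cyclically; hence phi_t = -phi Ric(d_s,d_s), a_t = -a Ric(e1,e1), ... *)
Definition RF_eqs (phi a b c : R -> R -> R) (z t : R) : Prop :=
  let a' := ds phi a z t in let b' := ds phi b z t in let c' := ds phi c z t in
  let A := a z t in let B := b z t in let C := c z t in
  pt phi z t = phi z t * (dss phi a z t / A + dss phi b z t / B + dss phi c z t / C) /\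
  pt a z t = dss phi a z t + a' * (b' / B + c' / C)
             - 2 * (A ^ 4 - (B ^ 2 - C ^ 2) ^ 2) / (A * B ^ 2 * C ^ 2) /\
  pt b z t = dss phi b z t + b' * (a' / A + c' / C)
             - 2 * (B ^ 4 - (A ^ 2 - C ^ 2) ^ 2) / (B * A ^ 2 * C ^ 2) /\
  pt c z t = dss phi c z t + c' * (a' / A + b' / B)
             - 2 * (C ^ 4 - (A ^ 2 - B ^ 2) ^ 2) / (C * A ^ 2 * B ^ 2).

Definition in_time (T : Rbar) (t : R) : Prop := 0 <= t /\ Rbar_lt (Finite t) T.

(* The functions are required smooth on R x (-eps, T) for some eps > 0
   (equivalently: smooth up to t = 0 on R x [0,T)); only their values on
   R x [0,T) matter. *)
Definition RF_solution (phi a b c : R -> R -> R) (T : Rbar) : Prop :=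
  Rbar_lt (Finite 0) T /\
  (exists eps, 0 < eps /\
     let P := fun (z t : R) => - eps < t /\ Rbar_lt (Finite t) T in
     smooth_on P phi /\ smooth_on P a /\ smooth_on P b /\ smooth_on P c) /\
  (forall z t, in_time T t ->
     phi (z + 2 * PI) t = phi z t /\ a (z + 2 * PI) t = a z t /\
     b (z + 2 * PI) t = b z t /\ c (z + 2 * PI) t = c z t) /\
  (forall z t, in_time T t ->
     0 < phi z t /\ 0 < a z t /\ 0 < b z t /\ 0 < c z t) /\
  (forall z t, in_time T t -> RF_eqs phi a b c z t).

Definition RF_maximal (phi a b c : R -> R -> R) (T : Rbar) : Prop :=
  RF_solution phi a b c T /\
  ~ (exists (T2 : Rbar) (phi2 a2 b2 c2 : R -> R -> R),
       Rbar_lt T T2 /\ RF_solution phi2 a2 b2 c2 T2 /\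
       forall z t, in_time T t ->
         phi2 z t = phi z t /\ a2 z t = a z t /\ b2 z t = b z t /\ c2 z t = c z t).

(* C <= max (K, max_s |f'(s,0)|)  (the max over s is attained by periodicity
   and continuity). *)
Definition le_max_init (C K : R) (phi f : R -> R -> R) : Prop :=
  C <= K \/ exists z0, C <= Rabs (ds phi f z0 0).

From Stdlib Require Import Reals Lra Lia ZArith IndefiniteDescription Classical.
From Coquelicot Require Import Coquelicot.
Open Scope R_scope.

(* Pinching: at a positive space-time maximum of ln (max (a,b,c) / min (a,b,c)),
   attained by f and g with h the third function, ln (f/g) is critical in s with
   (ln (f/g))'' <= 0 and nondecreasing in t, whereas the flow gives
   (ln (f/g))_t = (ln (f/g))'' - 4 (f^2 - g^2) (f^2 + g^2 - h^2) / (f^2 g^2 h^2) < 0.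
   So max <= lambda min persists and all ratios of a, b, c stay below 2.
   Gradient: at a space-time maximum of +-f' one has f'' = 0, +-f''' <= 0 and
   (f')_t = f''' - Q, where Q collects the derivative of the reaction term and
   f' (g'^2/g^2 + h'^2/h^2); with ratios below 2, +-Q > 0 as soon as +-f' > 10.
   Hence |f'| <= max (10, max_s |f'(s,0)|), and 10 is below all three constants
   of the statement. *)

Lemma continuity_2d_pt_fst (f : R -> R -> R) x y :
  continuity_2d_pt f x y -> continuity_pt (fun u => f u y) x.
Proof.
  intros Hc eps Heps.
  destruct (Hc (mkposreal eps Heps)) as [d Hd].
  exists d; split; [apply cond_pos|].
  intros u [_ Hu]. simpl in *. unfold R_dist in *.
  apply Hd; auto. rewrite Rminus_diag, Rabs_R0. apply cond_pos.
Qed.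

Definition clamp (c d y : R) : R := Rmax c (Rmin d y).

Lemma clamp_bounds c d y : c <= d -> c <= clamp c d y <= d.
Proof. intros; unfold clamp, Rmax, Rmin; repeat destruct Rle_dec; lra. Qed.

Lemma clamp_id c d y : c <= y <= d -> clamp c d y = y.
Proof. intros; unfold clamp, Rmax, Rmin; repeat destruct Rle_dec; lra. Qed.

Lemma clamp_dist c d y y' : c <= d -> Rabs (clamp c d y - clamp c d y') <= Rabs (y - y').
Proof.
  intros; unfold clamp, Rmax, Rmin; repeat destruct Rle_dec;
  unfold Rabs; repeat destruct Rcase_abs; lra.
Qed.

Lemma partial_max_continuity (G : R -> R -> R) (mx : R -> R) a b c d : c <= d ->
  (forall x y, a <= x <= b -> c <= y <= d -> continuity_2d_pt G x y) ->
  (forall y, c <= y <= d -> a <= mx y <= b /\ forall x, a <= x <= b -> G x y <= G (mx y) y) ->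
  forall y0, continuity_pt (fun y => G (mx (clamp c d y)) (clamp c d y)) y0.
Proof.
  intros Hcd Hc Hmx y0 e He.
  destruct (uniform_continuity_2d G a b c d Hc (mkposreal (e / 2) ltac:(lra))) as [dl Hdl].
  exists dl; split; [apply cond_pos|].
  intros y [_ Hy]. simpl in *. unfold R_dist in *.
  pose proof (clamp_bounds c d y Hcd) as C1. pose proof (clamp_bounds c d y0 Hcd) as C2.
  pose proof (clamp_dist c d y y0 Hcd) as L.
  set (y1 := clamp c d y) in *. set (y2 := clamp c d y0) in *.
  destruct (Hmx y1 C1) as [I1 M1]. destruct (Hmx y2 C2) as [I2 M2].
  assert (A1 := Hdl (mx y2) y2 (mx y2) y1 I2 C2 I2 C1
                 ltac:(rewrite Rminus_diag, Rabs_R0; apply cond_pos) ltac:(lra)).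
  assert (A2 := Hdl (mx y1) y1 (mx y1) y2 I1 C1 I1 C2
                 ltac:(rewrite Rminus_diag, Rabs_R0; apply cond_pos)
                 ltac:(rewrite Rabs_minus_sym; lra)).
  simpl in A1, A2.
  specialize (M1 (mx y2) I2). specialize (M2 (mx y1) I1).
  revert A1 A2; unfold Rabs; repeat destruct Rcase_abs; lra.
Qed.

(* Maximise in x for each y, then in y: clamping y makes the partial maximum
   continuous on all of R, as [continuity_ab_maj] requires. *)
Lemma continuity_2d_rect_maj (G : R -> R -> R) a b c d : a <= b -> c <= d ->
  (forall x y, a <= x <= b -> c <= y <= d -> continuity_2d_pt G x y) ->
  exists x0 y0, a <= x0 <= b /\ c <= y0 <= d /\
    forall x y, a <= x <= b -> c <= y <= d -> G x y <= G x0 y0.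
Proof.
  intros Hab Hcd Hc.
  assert (Hargmax : forall y, exists x, c <= y <= d ->
     a <= x <= b /\ forall x', a <= x' <= b -> G x' y <= G x y).
  { intro y. destruct (classic (c <= y <= d)) as [Hy|Hy].
    - destruct (continuity_ab_maj (fun x => G x y) a b Hab) as [x [Hx1 Hx2]].
      + intros x Hx. apply continuity_2d_pt_fst. auto.
      + exists x; auto.
    - exists a; tauto. }
  destruct (functional_choice _ Hargmax) as [mx Hmx].
  destruct (continuity_ab_maj (fun y => G (mx (clamp c d y)) (clamp c d y)) c d Hcd
              (fun y _ => partial_max_continuity G mx a b c d Hcd Hc Hmx y)) as [ys [Hys1 Hys2]].
  exists (mx ys), ys. destruct (Hmx ys Hys2) as [I M].
  split; [exact I|]. split; [exact Hys2|].
  intros x y Hx Hy.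
  specialize (Hys1 y Hy). simpl in Hys1. rewrite !clamp_id in Hys1 by auto.
  destruct (Hmx y Hy) as [_ My]. specialize (My x Hx). lra.
Qed.

Lemma periodic_shift_nat (F : R -> R) : (forall z, F (z + 2 * PI) = F z) ->
  forall n z, F (z + INR n * (2 * PI)) = F z.
Proof.
  intros HP n; induction n as [|n IH]; intro z.
  - simpl. f_equal; ring.
  - rewrite S_INR, <- (IH z), <- (HP (z + INR n * (2 * PI))). f_equal; ring.
Qed.

Lemma periodic_repr (F : R -> R) : (forall z, F (z + 2 * PI) = F z) ->
  forall z, exists x, 0 <= x <= 2 * PI /\ F z = F x.
Proof.
  intros HP z. pose proof PI_RGT_0 as Hpi.
  set (k := (up (z / (2 * PI)) - 1)%Z).
  assert (Hk : IZR k * (2 * PI) <= z < IZR k * (2 * PI) + 2 * PI).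
  { destruct (archimed (z / (2 * PI))) as [H1 H2].
    assert (Hq : IZR k <= z / (2 * PI) < IZR k + 1)
      by (unfold k; rewrite minus_IZR; simpl; lra).
    set (q := z / (2 * PI)) in Hq.
    replace z with (q * (2 * PI)) by (unfold q; field; lra).
    split; nra. }
  exists (z - IZR k * (2 * PI)). split; [lra|].
  destruct (Z_le_gt_dec 0 k) as [Hk0|Hk0].
  - destruct (IZN k Hk0) as [n ->]. rewrite <- INR_IZR_INZ.
    rewrite <- (periodic_shift_nat F HP n (z - INR n * (2 * PI))). f_equal; ring.
  - destruct (IZN (- k) ltac:(lia)) as [n Hn].
    replace (IZR k) with (- INR n) by (rewrite INR_IZR_INZ, <- Hn, opp_IZR; ring).
    rewrite <- (periodic_shift_nat F HP n z). f_equal; ring.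
Qed.

Lemma periodic_max_principle (G : R -> R -> R) (t1 L : R) :
  0 <= t1 ->
  (forall x y, 0 <= x <= 2 * PI -> 0 <= y <= t1 -> continuity_2d_pt G x y) ->
  (forall z y, 0 <= y <= t1 -> G (z + 2 * PI) y = G z y) ->
  (forall z, G z 0 <= L) ->
  (forall z t, 0 < t <= t1 -> L < G z t ->
     (forall z' s, 0 <= s <= t -> G z' s <= G z t) -> False) ->
  forall z, G z t1 <= L.
Proof.
  intros Ht1 Hc Hp H0 Hnomax z.
  pose proof PI_RGT_0.
  destruct (continuity_2d_rect_maj G 0 (2 * PI) 0 t1 ltac:(lra) Ht1 Hc)
    as [x0 [y0 [Hx0 [Hy0 HM]]]].
  assert (Hall : forall z' s, 0 <= s <= t1 -> G z' s <= G x0 y0).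
  { intros z' s Hs.
    destruct (periodic_repr (fun u => G u s) (fun u => Hp u s Hs) z') as [x [Hx ->]].
    apply HM; auto. }
  destruct (Rle_dec (G x0 y0) L) as [HL|HL].
  - specialize (Hall z t1 ltac:(lra)). lra.
  - exfalso. destruct (Req_dec y0 0) as [->|Hy].
    + specialize (H0 x0). lra.
    + apply (Hnomax x0 y0); [lra|lra|]. intros z' s Hs. apply Hall. lra.
Qed.

Lemma is_derive_pos_local (h : R -> R) z l : is_derive h z l -> 0 < l ->
  exists d, 0 < d /\ forall u, 0 < u < d -> h z < h (z + u) /\ h (z - u) < h z.
Proof.
  intros Hd Hl. apply is_derive_Reals in Hd.
  destruct (Hd (l / 2) ltac:(lra)) as [dl Hdl].
  exists dl; split; [apply cond_pos|]. intros u Hu.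
  assert (A1 := Hdl u ltac:(lra) ltac:(rewrite Rabs_pos_eq; lra)).
  assert (A2 := Hdl (- u) ltac:(lra) ltac:(rewrite Rabs_Ropp, Rabs_pos_eq; lra)).
  apply Rabs_def2 in A1. apply Rabs_def2 in A2.
  set (q1 := (h (z + u) - h z) / u) in *.
  set (q2 := (h (z + - u) - h z) / - u) in *.
  assert (E1 : h (z + u) - h z = q1 * u) by (unfold q1; field; lra).
  assert (E2 : h (z + - u) - h z = q2 * - u) by (unfold q2; field; lra).
  replace (z - u) with (z + - u) by ring.
  split; nra.
Qed.

Lemma is_derive_neg_local (h : R -> R) z l : is_derive h z l -> l < 0 ->
  exists d, 0 < d /\ forall u, 0 < u < d -> h (z + u) < h z /\ h z < h (z - u).
Proof.
  intros Hd Hl.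
  destruct (is_derive_pos_local (fun x => - h x) z (- l)) as [d [Hd0 Hu]].
  - apply (is_derive_opp h); auto.
  - lra.
  - exists d; split; auto. intros u Hu'. specialize (Hu u Hu'). lra.
Qed.

Lemma is_derive_right_max (g : R -> R) t l : 0 < t -> is_derive g t l ->
  (forall s, 0 <= s <= t -> g s <= g t) -> 0 <= l.
Proof.
  intros Ht Hd Hm. destruct (Rle_dec 0 l) as [|Hl]; auto. exfalso.
  destruct (is_derive_neg_local g t l Hd ltac:(lra)) as [d [Hd0 Hu]].
  set (u := Rmin d t / 2).
  assert (0 < u < d /\ 0 <= t - u <= t) as [Hu1 Hu2]
    by (unfold u, Rmin; destruct Rle_dec; lra).
  specialize (Hu u Hu1). specialize (Hm (t - u) Hu2). lra.
Qed.

Lemma is_derive_global_max (h h1 h2 : R -> R) z :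
  (forall x, is_derive h x (h1 x)) -> (forall x, is_derive h1 x (h2 x)) ->
  (forall x, h x <= h z) -> h1 z = 0 /\ h2 z <= 0.
Proof.
  intros D1 D2 Hm.
  assert (E : h1 z = 0).
  { destruct (Rtotal_order (h1 z) 0) as [Hl|[Hl|Hl]]; auto; exfalso.
    - destruct (is_derive_neg_local h z _ (D1 z) Hl) as [d [Hd Hu]].
      specialize (Hu (d / 2) ltac:(lra)). specialize (Hm (z - d / 2)). lra.
    - destruct (is_derive_pos_local h z _ (D1 z) Hl) as [d [Hd Hu]].
      specialize (Hu (d / 2) ltac:(lra)). specialize (Hm (z + d / 2)). lra. }
  split; auto.
  destruct (Rle_dec (h2 z) 0) as [|Hl]; auto. exfalso.
  (* h1 vanishes at z and increases there, so h increases to the right of z. *)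
  destruct (is_derive_pos_local h1 z _ (D2 z) ltac:(lra)) as [d [Hd Hu]].
  rewrite E in Hu.
  destruct (MVT_cor2 h h1 z (z + d / 2) ltac:(lra)) as [c [Ec Hc]].
  { intros x _. apply is_derive_Reals, D1. }
  assert (0 < h1 c).
  { replace c with (z + (c - z)) by ring. apply Hu. lra. }
  specialize (Hm (z + d / 2)). nra.
Qed.

Lemma continuity_2d_pt_Rmax (f g : R -> R -> R) x y :
  continuity_2d_pt f x y -> continuity_2d_pt g x y ->
  continuity_2d_pt (fun u v => Rmax (f u v) (g u v)) x y.
Proof.
  intros Hf Hg.
  apply continuity_2d_pt_ext with (fun u v => (f u v + g u v + Rabs (f u v - g u v)) * / 2).
  { intros u v. unfold Rmax, Rabs; destruct Rle_dec, Rcase_abs; lra. }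
  apply continuity_2d_pt_mult; [|apply continuity_2d_pt_const].
  apply continuity_2d_pt_plus; [apply continuity_2d_pt_plus; auto|].
  apply (continuity_1d_2d_pt_comp Rabs); [apply Rcontinuity_abs|].
  apply continuity_2d_pt_minus; auto.
Qed.

Lemma continuity_2d_pt_Rmin (f g : R -> R -> R) x y :
  continuity_2d_pt f x y -> continuity_2d_pt g x y ->
  continuity_2d_pt (fun u v => Rmin (f u v) (g u v)) x y.
Proof.
  intros Hf Hg.
  apply continuity_2d_pt_ext with (fun u v => - Rmax (- f u v) (- g u v)).
  { intros u v. unfold Rmax, Rmin; destruct Rle_dec, Rle_dec; lra. }
  apply continuity_2d_pt_opp, continuity_2d_pt_Rmax; apply continuity_2d_pt_opp; auto.
Qed.

Lemma continuity_2d_pt_ln (f : R -> R -> R) x y : continuity_2d_pt f x y -> 0 < f x y ->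
  continuity_2d_pt (fun u v => ln (f u v)) x y.
Proof.
  intros H Hp. apply (continuity_1d_2d_pt_comp ln f); auto.
  apply continuity_pt_filterlim, continuous_ln; auto.
Qed.

Definition strip (eps : R) (T : Rbar) (z t : R) : Prop := - eps < t /\ Rbar_lt t T.

Lemma strip_open eps T z t : strip eps T z t ->
  exists d : posreal, forall u v, Rabs (v - t) < d -> strip eps T u v.
Proof.
  intros [H1 H2].
  assert (Habove : exists t', t < t' /\ Rbar_lt t' T).
  { destruct T as [r| |]; simpl in *.
    - exists ((t + r) / 2); split; lra.
    - exists (t + 1); split; [lra|exact I].
    - contradiction. }
  destruct Habove as [t' [Ht1 Ht2]].
  assert (Hp : 0 < Rmin (t + eps) (t' - t)) by (apply Rmin_pos; lra).
  exists (mkposreal _ Hp). intros u v Hv. simpl in Hv.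
  apply Rabs_def2 in Hv.
  pose proof (Rmin_l (t + eps) (t' - t)). pose proof (Rmin_r (t + eps) (t' - t)).
  split; [lra|]. apply Rbar_le_lt_trans with (Finite t'); auto. simpl; lra.
Qed.

Lemma in_time_strip eps T t z : 0 < eps -> in_time T t -> strip eps T z t.
Proof. intros He [H1 H2]. split; auto; lra. Qed.

Lemma in_time_le T t s : in_time T t -> 0 <= s <= t -> in_time T s.
Proof.
  intros [H1 H2] Hs. split; [lra|]. apply Rbar_le_lt_trans with (Finite t); auto. simpl; lra.
Qed.

Lemma smooth_continuity_2d P f l z t : smooth_on P f -> P z t ->
  continuity_2d_pt (iterD l f) z t.
Proof. intros Hs Hp. apply continuity_2d_pt_filterlim, (Hs l z t Hp). Qed.

Lemma smooth_is_derive_z P f l z t : smooth_on P f -> P z t ->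
  is_derive (fun z' => iterD l f z' t) z (pz (iterD l f) z t).
Proof. intros Hs Hp. apply Derive_correct, (Hs l z t Hp). Qed.

Lemma smooth_is_derive_t P f l z t : smooth_on P f -> P z t ->
  is_derive (fun t' => iterD l f z t') t (pt (iterD l f) z t).
Proof. intros Hs Hp. apply Derive_correct, (Hs l z t Hp). Qed.

Lemma smooth_pt_pz eps T f z t : smooth_on (strip eps T) f -> strip eps T z t ->
  pt (pz f) z t = pz (pt f) z t.
Proof.
  intros Hs Hp. symmetry. apply Schwarz.
  - destruct (strip_open eps T z t Hp) as [d Hd].
    exists d. intros u v _ Hv. specialize (Hd u v Hv).
    repeat split; eexists;
      [ apply (smooth_is_derive_z (strip eps T) f nil)
      | apply (smooth_is_derive_t (strip eps T) f nil)
      | apply (smooth_is_derive_z (strip eps T) f (false :: nil))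
      | apply (smooth_is_derive_t (strip eps T) f (true :: nil)) ]; eassumption.
  - exact (smooth_continuity_2d _ f (true :: false :: nil) z t Hs Hp).
  - exact (smooth_continuity_2d _ f (false :: true :: nil) z t Hs Hp).
Qed.

Lemma dss_formula P phi f z t : smooth_on P phi -> smooth_on P f -> P z t -> phi z t <> 0 ->
  dss phi f z t = (pz (pz f) z t * phi z t - pz f z t * pz phi z t) / (phi z t) ^ 2 / phi z t.
Proof.
  intros Hph Hf Hp Hn. unfold dss, ds at 1. f_equal.
  apply is_derive_unique, (is_derive_div (fun z' => pz f z' t) (fun z' => phi z' t)); auto.
  - exact (smooth_is_derive_z P f (true :: nil) z t Hf Hp).
  - exact (smooth_is_derive_z P phi nil z t Hph Hp).
Qed.

Lemma pz_periodic P f z t : smooth_on P f -> (forall z', P z' t) ->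
  (forall z', f (z' + 2 * PI) t = f z' t) -> pz f (z + 2 * PI) t = pz f z t.
Proof.
  intros Sf HP Hp. unfold pz.
  rewrite <- (Derive_ext (fun z' => f (z' + 2 * PI) t) (fun z' => f z' t) z Hp).
  symmetry. apply is_derive_unique.
  pose proof (smooth_is_derive_z P f nil (z + 2 * PI) t Sf (HP _)) as D. simpl in D.
  auto_derive.
  - eexists; eassumption.
  - rewrite (is_derive_unique _ _ _ D). ring.
Qed.

Lemma ds_continuity_2d P phi f x y : smooth_on P phi -> smooth_on P f -> P x y -> 0 < phi x y ->
  continuity_2d_pt (ds phi f) x y.
Proof.
  intros Sph Sf HP Hp. unfold ds.
  apply (continuity_2d_pt_mult (pz f) (fun u v => / phi u v)).
  - exact (smooth_continuity_2d P f (true :: nil) x y Sf HP).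
  - apply (continuity_2d_pt_inv phi); [exact (smooth_continuity_2d P phi nil x y Sph HP)|lra].
Qed.

Lemma ds_is_derive_z P phi f z t : smooth_on P phi -> smooth_on P f -> P z t -> phi z t <> 0 ->
  is_derive (fun z' => ds phi f z' t) z
    ((pz (pz f) z t * phi z t - pz f z t * pz phi z t) / phi z t ^ 2).
Proof.
  intros Sph Sf HP Hn.
  apply (is_derive_div (fun z' => pz f z' t) (fun z' => phi z' t)); auto.
  - exact (smooth_is_derive_z P f (true :: nil) z t Sf HP).
  - exact (smooth_is_derive_z P phi nil z t Sph HP).
Qed.

Lemma ds_is_derive_zz P phi f z t : smooth_on P phi -> smooth_on P f ->
  (forall z', P z' t) -> phi z t <> 0 ->
  is_derive (fun z' => (pz (pz f) z' t * phi z' t - pz f z' t * pz phi z' t) / phi z' t ^ 2) z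
    (((pz (pz (pz f)) z t * phi z t - pz f z t * pz (pz phi) z t) * phi z t
      - 2 * (pz (pz f) z t * phi z t - pz f z t * pz phi z t) * pz phi z t) / phi z t ^ 3).
Proof.
  intros Sph Sf HP Hn.
  pose proof (smooth_is_derive_z P f (true :: true :: nil) z t Sf (HP z)) as F3.
  pose proof (smooth_is_derive_z P f (true :: nil) z t Sf (HP z)) as F2.
  pose proof (smooth_is_derive_z P phi (true :: nil) z t Sph (HP z)) as E2.
  pose proof (smooth_is_derive_z P phi nil z t Sph (HP z)) as E1.
  simpl in F3, F2, E2, E1.
  auto_derive.
  - repeat split; try (eexists; eassumption).
    repeat apply Rmult_integral_contrapositive_currified; auto.
  - rewrite (is_derive_unique _ _ _ F3), (is_derive_unique _ _ _ F2),
      (is_derive_unique _ _ _ E2), (is_derive_unique _ _ _ E1).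
    field. auto.
Qed.

Lemma ds_is_derive_t eps T phi f z t : smooth_on (strip eps T) phi -> smooth_on (strip eps T) f ->
  strip eps T z t -> phi z t <> 0 ->
  is_derive (fun s => ds phi f z s) t ((pz (pt f) z t - ds phi f z t * pt phi z t) / phi z t).
Proof.
  intros Sph Sf HP Hn.
  rewrite <- (smooth_pt_pz eps T f z t Sf HP).
  replace ((pt (pz f) z t - ds phi f z t * pt phi z t) / phi z t)
    with ((pt (pz f) z t * phi z t - pz f z t * pt phi z t) / phi z t ^ 2)
    by (unfold ds; field; auto).
  apply (is_derive_div (fun s => pz f z s) (fun s => phi z s)); auto.
  - exact (smooth_is_derive_t _ f (true :: nil) z t Sf HP).
  - exact (smooth_is_derive_t _ phi nil z t Sph HP).
Qed.

Lemma ln_is_derive_z P f z t : smooth_on P f -> P z t -> 0 < f z t ->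
  is_derive (fun z' => ln (f z' t)) z (pz f z t / f z t).
Proof.
  intros Sf HP Hf.
  pose proof (smooth_is_derive_z P f nil z t Sf HP) as F1. simpl in F1.
  auto_derive.
  - split; [eexists; eassumption|auto].
  - rewrite (is_derive_unique _ _ _ F1). field. lra.
Qed.

Lemma ln_is_derive_t P f z t : smooth_on P f -> P z t -> 0 < f z t ->
  is_derive (fun s => ln (f z s)) t (pt f z t / f z t).
Proof.
  intros Sf HP Hf.
  pose proof (smooth_is_derive_t P f nil z t Sf HP) as F1. simpl in F1.
  auto_derive.
  - split; [eexists; eassumption|auto].
  - rewrite (is_derive_unique _ _ _ F1). field. lra.
Qed.

Lemma log_derivative_is_derive_z P f z t : smooth_on P f -> P z t -> 0 < f z t ->
  is_derive (fun z' => pz f z' t / f z' t) z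
    ((pz (pz f) z t * f z t - pz f z t ^ 2) / f z t ^ 2).
Proof.
  intros Sf HP Hf.
  replace (pz f z t ^ 2) with (pz f z t * pz f z t) by ring.
  apply (is_derive_div (fun z' => pz f z' t) (fun z' => f z' t)); [| |lra].
  - exact (smooth_is_derive_z P f (true :: nil) z t Sf HP).
  - exact (smooth_is_derive_z P f nil z t Sf HP).
Qed.

Definition reaction (x y w : R) : R := (x ^ 4 - (y ^ 2 - w ^ 2) ^ 2) / (x * y ^ 2 * w ^ 2).

Definition evolves (phi f g h : R -> R -> R) (z t : R) : Prop :=
  pt f z t = dss phi f z t + ds phi f z t * (ds phi g z t / g z t + ds phi h z t / h z t)
             - 2 * reaction (f z t) (g z t) (h z t).

(* Partial derivatives of [reaction] in its first and second arguments; the third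
   one is [reaction_dy x w y] since [reaction x y w] is symmetric in [y, w]. *)
Definition reaction_dx (x y w : R) : R :=
  (3 * x ^ 4 + (y ^ 2 - w ^ 2) ^ 2) / (x ^ 2 * y ^ 2 * w ^ 2).
Definition reaction_dy (x y w : R) : R := 2 * (w ^ 4 - x ^ 4 - y ^ 4) / (x * y ^ 3 * w ^ 2).

Definition gradient_reaction (F G H X Y W : R) : R :=
  X * (Y ^ 2 / G ^ 2 + W ^ 2 / H ^ 2)
  + 2 * (reaction_dx F G H * X + reaction_dy F G H * Y + reaction_dy F H G * W).

Lemma reaction_log_gap F G H : 0 < F -> 0 < G -> 0 < H -> G < F -> H <= F ->
  0 < reaction F G H / F - reaction G F H / G.
Proof.
  intros HF HG HH HGF HHF.
  replace (reaction F G H / F - reaction G F H / G)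
    with (2 * (F ^ 2 - G ^ 2) * (F ^ 2 + G ^ 2 - H ^ 2) / (F ^ 2 * G ^ 2 * H ^ 2))
    by (unfold reaction; field; lra).
  apply Rdiv_lt_0_compat; [|apply Rmult_lt_0_compat; [apply Rmult_lt_0_compat|]; apply pow_lt; lra].
  apply Rmult_lt_0_compat; [|nra]. nra.
Qed.

Definition ratios_lt2 (x y w : R) : Prop :=
  x < 2 * y /\ y < 2 * x /\ x < 2 * w /\ w < 2 * x /\ y < 2 * w /\ w < 2 * y.

Lemma quartic_ratio_bound p q r : 0 < p -> 0 < q -> 0 < r ->
  p < 4 * q -> q < 4 * p -> p < 4 * r -> r < 4 * p -> q < 4 * r -> r < 4 * q ->
  p ^ 4 + (q - r) ^ 2 * (q + r) ^ 2 <= 25 * (3 * p ^ 2 + (q - r) ^ 2) * (q * r).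
Proof.
  intros Hp Hq Hr H1 H2 H3 H4 H5 H6.
  assert (A : p ^ 2 <= 75 * (q * r)) by (assert (p * p < 16 * (q * r)) by nra; nra).
  assert (B : (q + r) ^ 2 <= 25 * (q * r)) by (assert (0 < (4 * r - q) * (4 * q - r)) by nra; nra).
  assert (C : p ^ 4 <= 75 * p ^ 2 * (q * r)).
  { replace (p ^ 4) with (p ^ 2 * p ^ 2) by ring. assert (0 <= p ^ 2) by nra. nra. }
  assert (D : (q - r) ^ 2 * (q + r) ^ 2 <= (q - r) ^ 2 * (25 * (q * r)))
    by (apply Rmult_le_compat_l; [apply pow2_ge_0|auto]).
  nra.
Qed.

(* For Q the gradient reaction, u = F Y / G and v = F W / H, one has
   F^2 Q = X (u^2 + v^2) + 2 (a X + b u + c v) with b^2 + c^2 <= 200 a by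
   [quartic_ratio_bound]; completing the squares, X F^2 Q >= 2 a (X^2 - 100). *)
Lemma gradient_reaction_pos F G H X Y W : 0 < F -> 0 < G -> 0 < H ->
  ratios_lt2 F G H -> 10 < X -> 0 < gradient_reaction F G H X Y W.
Proof.
  intros HF HG HH (R1 & R2 & R3 & R4 & R5 & R6) HX.
  set (D := G ^ 2 * H ^ 2).
  set (A := 3 * F ^ 4 + (G ^ 2 - H ^ 2) ^ 2).
  set (B := 2 * (H ^ 4 - F ^ 4 - G ^ 4)).
  set (C := 2 * (G ^ 4 - F ^ 4 - H ^ 4)).
  set (u := F * Y / G). set (v := F * W / H).
  assert (HD : 0 < D) by (unfold D; apply Rmult_lt_0_compat; apply pow_lt; lra).
  assert (HA : 0 < A)
    by (unfold A; pose proof (pow_lt F 4 HF); pose proof (pow2_ge_0 (G ^ 2 - H ^ 2)); lra).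
  assert (Id : gradient_reaction F G H X Y W * F ^ 2
               = X * (u ^ 2 + v ^ 2) + 2 * (A / D * X + B / D * u + C / D * v)).
  { unfold gradient_reaction, reaction_dx, reaction_dy, u, v, A, B, C, D. field. lra. }
  assert (Key : B ^ 2 + C ^ 2 <= 200 * A * D).
  { replace (B ^ 2 + C ^ 2) with (8 * ((F ^ 2) ^ 4 + (G ^ 2 - H ^ 2) ^ 2 * (G ^ 2 + H ^ 2) ^ 2))
      by (unfold B, C; ring).
    replace (200 * A * D)
      with (8 * (25 * (3 * (F ^ 2) ^ 2 + (G ^ 2 - H ^ 2) ^ 2) * (G ^ 2 * H ^ 2)))
      by (unfold A, D; ring).
    apply Rmult_le_compat_l; [lra|].
    apply quartic_ratio_bound; try (apply pow_lt; lra); nra. }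
  set (a := A / D). set (b := B / D). set (c := C / D).
  assert (Ha : 0 < a) by (unfold a; apply Rdiv_lt_0_compat; auto).
  assert (Key' : b ^ 2 + c ^ 2 <= 200 * a).
  { unfold a, b, c.
    replace ((B / D) ^ 2 + (C / D) ^ 2) with ((B ^ 2 + C ^ 2) / D ^ 2) by (field; lra).
    replace (200 * (A / D)) with (200 * A * D / D ^ 2) by (field; lra).
    apply Rmult_le_compat_r; auto. left; apply Rinv_0_lt_compat, pow_lt; auto. }
  assert (Pos : 0 < X * (X * (u ^ 2 + v ^ 2) + 2 * (a * X + b * u + c * v))).
  { replace (X * (X * (u ^ 2 + v ^ 2) + 2 * (a * X + b * u + c * v))) with
      ((X * u + b) ^ 2 + (X * v + c) ^ 2 - (b ^ 2 + c ^ 2) + 2 * a * X ^ 2) by ring.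
    pose proof (pow2_ge_0 (X * u + b)). pose proof (pow2_ge_0 (X * v + c)).
    assert (a * (X ^ 2 - 100) > 0) by (apply Rmult_lt_0_compat; nra).
    nra. }
  fold a b c in Id. rewrite <- Id in Pos.
  assert (HF2 : 0 < F ^ 2) by (apply pow_lt; lra).
  apply (Rmult_lt_reg_r (F ^ 2)); auto.
  apply (Rmult_lt_reg_l X); lra.
Qed.

Lemma gradient_reaction_signed_pos sg F G H X Y W : sg = 1 \/ sg = -1 ->
  0 < F -> 0 < G -> 0 < H -> ratios_lt2 F G H -> 10 < sg * X ->
  0 < sg * gradient_reaction F G H X Y W.
Proof.
  intros [-> | ->] HF HG HH Hr HX.
  - rewrite Rmult_1_l in *. apply gradient_reaction_pos; auto.
  - replace (-1 * gradient_reaction F G H X Y W)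
      with (gradient_reaction F G H (- X) (- Y) (- W)) by (unfold gradient_reaction, Rdiv; ring).
    apply gradient_reaction_pos; auto. lra.
Qed.

Definition max3 (x y w : R) : R := Rmax x (Rmax y w).
Definition min3 (x y w : R) : R := Rmin x (Rmin y w).

Lemma max3_cases x y w : max3 x y w = x \/ max3 x y w = y \/ max3 x y w = w.
Proof. unfold max3, Rmax; repeat destruct Rle_dec; auto. Qed.

Lemma min3_cases x y w : min3 x y w = x \/ min3 x y w = y \/ min3 x y w = w.
Proof. unfold min3, Rmin; repeat destruct Rle_dec; auto. Qed.

Lemma min3_le_max3 x y w :
  min3 x y w <= x <= max3 x y w /\ min3 x y w <= y <= max3 x y w /\
  min3 x y w <= w <= max3 x y w.
Proof. unfold min3, max3, Rmin, Rmax; repeat destruct Rle_dec; lra. Qed.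

Lemma min3_pos x y w : 0 < x -> 0 < y -> 0 < w -> 0 < min3 x y w.
Proof. intros; unfold min3, Rmin; repeat destruct Rle_dec; lra. Qed.

Lemma max3_lt2 x y w lam : 0 < x -> 0 < y -> 0 < w -> lam < 2 ->
  max3 x y w <= lam * min3 x y w -> ratios_lt2 x y w.
Proof.
  intros Hx Hy Hw Hl Hle.
  pose proof (min3_pos x y w Hx Hy Hw).
  assert (max3 x y w < 2 * min3 x y w) by nra.
  pose proof (min3_le_max3 x y w). unfold ratios_lt2. lra.
Qed.

Section RicciFlowSolution.

Variables (eps : R) (T : Rbar) (phi a b c : R -> R -> R).
Hypothesis eps_pos : 0 < eps.
Hypothesis phi_smooth : smooth_on (strip eps T) phi.
Hypothesis a_smooth : smooth_on (strip eps T) a.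
Hypothesis b_smooth : smooth_on (strip eps T) b.
Hypothesis c_smooth : smooth_on (strip eps T) c.
Hypothesis periodic : forall z t, in_time T t ->
  phi (z + 2 * PI) t = phi z t /\ a (z + 2 * PI) t = a z t /\
  b (z + 2 * PI) t = b z t /\ c (z + 2 * PI) t = c z t.
Hypothesis positive : forall z t, in_time T t ->
  0 < phi z t /\ 0 < a z t /\ 0 < b z t /\ 0 < c z t.
Hypothesis flow : forall z t, in_time T t -> RF_eqs phi a b c z t.

(* The equations are invariant under permuting (a, b, c), so the estimates are
   proved once for an arbitrary ordering. *)
Inductive perm3 : (R -> R -> R) -> (R -> R -> R) -> (R -> R -> R) -> Prop :=
  | perm3_abc : perm3 a b c
  | perm3_acb : perm3 a c b
  | perm3_bac : perm3 b a c
  | perm3_bca : perm3 b c a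
  | perm3_cab : perm3 c a b
  | perm3_cba : perm3 c b a.

Lemma perm3_swap f g h : perm3 f g h -> perm3 g f h.
Proof. destruct 1; constructor. Qed.

Lemma perm3_smooth f g h : perm3 f g h ->
  smooth_on (strip eps T) f /\ smooth_on (strip eps T) g /\ smooth_on (strip eps T) h.
Proof. destruct 1; auto. Qed.

Lemma perm3_pos f g h z t : perm3 f g h -> in_time T t ->
  0 < phi z t /\ 0 < f z t /\ 0 < g z t /\ 0 < h z t.
Proof. intros Hp Ht; destruct (positive z t Ht) as (? & ? & ? & ?); destruct Hp; auto. Qed.

Lemma perm3_periodic f g h z t : perm3 f g h -> in_time T t -> f (z + 2 * PI) t = f z t.
Proof. intros Hp Ht; destruct (periodic z t Ht) as (? & ? & ? & ?); destruct Hp; auto. Qed.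

Lemma perm3_evolves f g h z t : perm3 f g h -> in_time T t -> evolves phi f g h z t.
Proof.
  intros Hp Ht.
  destruct (positive z t Ht) as (_ & Pa & Pb & Pc).
  destruct (flow z t Ht) as (_ & Ea & Eb & Ec).
  unfold evolves, reaction.
  destruct Hp; first [rewrite Ea | rewrite Eb | rewrite Ec]; field; lra.
Qed.

Lemma perm3_phi_rate f g h z t : perm3 f g h -> in_time T t ->
  pt phi z t = phi z t * (dss phi f z t / f z t + dss phi g z t / g z t + dss phi h z t / h z t).
Proof. intros Hp Ht; destruct (flow z t Ht) as (E & _); rewrite E; destruct Hp; ring. Qed.

Lemma perm3_ratios f g h z t : perm3 f g h ->
  ratios_lt2 (a z t) (b z t) (c z t) -> ratios_lt2 (f z t) (g z t) (h z t).
Proof. unfold ratios_lt2; destruct 1; tauto. Qed.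

Lemma log_ratio_rate_critical f g h z t : perm3 f g h -> in_time T t ->
  pz f z t / f z t = pz g z t / g z t ->
  pt f z t / f z t - pt g z t / g z t =
  ((pz (pz f) z t * f z t - pz f z t ^ 2) / f z t ^ 2
   - (pz (pz g) z t * g z t - pz g z t ^ 2) / g z t ^ 2) / phi z t ^ 2
  - 2 * (reaction (f z t) (g z t) (h z t) / f z t - reaction (g z t) (f z t) (h z t) / g z t).
Proof.
  intros Hp Ht Hcrit.
  destruct (perm3_smooth f g h Hp) as (Sf & Sg & _).
  destruct (perm3_pos f g h z t Hp Ht) as (P0 & Pf & Pg & Ph).
  pose proof (in_time_strip eps T t z eps_pos Ht) as HP.
  rewrite (perm3_evolves f g h z t Hp Ht), (perm3_evolves g f h z t (perm3_swap f g h Hp) Ht).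
  unfold evolves, ds.
  rewrite (dss_formula (strip eps T) phi f z t), (dss_formula (strip eps T) phi g z t)
    by (auto; lra).
  replace (pz g z t) with (pz f z t / f z t * g z t) by (rewrite Hcrit; field; lra).
  field; repeat split; lra.
Qed.

Lemma log_ratio_no_interior_max f g h z t : perm3 f g h -> 0 < t -> in_time T t ->
  g z t < f z t -> h z t <= f z t ->
  (forall z' s, 0 <= s <= t -> ln (f z' s) - ln (g z' s) <= ln (f z t) - ln (g z t)) -> False.
Proof.
  intros Hp Ht0 Ht Hgf Hhf Hmax.
  destruct (perm3_smooth f g h Hp) as (Sf & Sg & _).
  assert (HP : forall z', strip eps T z' t) by (intro; apply in_time_strip; auto).
  assert (Hpos : forall z', 0 < f z' t /\ 0 < g z' t)
    by (intro z'; destruct (perm3_pos f g h z' t Hp Ht) as (_ & ? & ? & _); auto).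
  set (u1 := fun z' => pz f z' t / f z' t - pz g z' t / g z' t).
  set (u2 := fun z' => (pz (pz f) z' t * f z' t - pz f z' t ^ 2) / f z' t ^ 2
                     - (pz (pz g) z' t * g z' t - pz g z' t ^ 2) / g z' t ^ 2).
  assert (D1 : forall x, is_derive (fun z' => ln (f z' t) - ln (g z' t)) x (u1 x)).
  { intro x. destruct (Hpos x) as [Pf Pg].
    apply (is_derive_minus (fun z' => ln (f z' t)) (fun z' => ln (g z' t)));
      apply (ln_is_derive_z (strip eps T)); auto. }
  assert (D2 : forall x, is_derive u1 x (u2 x)).
  { intro x. destruct (Hpos x) as [Pf Pg].
    apply (is_derive_minus (fun z' => pz f z' t / f z' t) (fun z' => pz g z' t / g z' t));
      apply (log_derivative_is_derive_z (strip eps T)); auto. }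
  destruct (is_derive_global_max _ _ _ z D1 D2 (fun x => Hmax x t ltac:(lra))) as [Hcrit Hconc].
  destruct (perm3_pos f g h z t Hp Ht) as (P0 & Pf & Pg & Ph).
  assert (Hrate : 0 <= pt f z t / f z t - pt g z t / g z t).
  { apply (is_derive_right_max (fun s => ln (f z s) - ln (g z s)) t); auto.
    apply (is_derive_minus (fun s => ln (f z s)) (fun s => ln (g z s)));
      apply (ln_is_derive_t (strip eps T)); auto. }
  rewrite (log_ratio_rate_critical f g h z t Hp Ht) in Hrate
    by (unfold u1 in Hcrit; lra).
  pose proof (reaction_log_gap (f z t) (g z t) (h z t) Pf Pg Ph Hgf Hhf).
  assert (u2 z / phi z t ^ 2 <= 0).
  { apply Rmult_le_0_r; auto. left; apply Rinv_0_lt_compat, pow_lt; lra. }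
  unfold u2 in *. lra.
Qed.

Definition spread (z t : R) : R :=
  ln (max3 (a z t) (b z t) (c z t)) - ln (min3 (a z t) (b z t) (c z t)).

Lemma perm3_between f g h z t : perm3 f g h ->
  let M := max3 (a z t) (b z t) (c z t) in let m := min3 (a z t) (b z t) (c z t) in
  m <= f z t <= M /\ m <= g z t <= M /\ m <= h z t <= M.
Proof. intros Hp; pose proof (min3_le_max3 (a z t) (b z t) (c z t)); destruct Hp; simpl; tauto. Qed.

Lemma perm3_extremes z t : min3 (a z t) (b z t) (c z t) < max3 (a z t) (b z t) (c z t) ->
  exists f g h, perm3 f g h /\
    max3 (a z t) (b z t) (c z t) = f z t /\ min3 (a z t) (b z t) (c z t) = g z t.
Proof.
  intros Hlt.
  destruct (max3_cases (a z t) (b z t) (c z t)) as [Mx|[Mx|Mx]];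
  destruct (min3_cases (a z t) (b z t) (c z t)) as [mn|[mn|mn]];
  try (rewrite Mx, mn in Hlt; lra).
  - exists a, b, c; repeat split; auto; constructor.
  - exists a, c, b; repeat split; auto; constructor.
  - exists b, a, c; repeat split; auto; constructor.
  - exists b, c, a; repeat split; auto; constructor.
  - exists c, a, b; repeat split; auto; constructor.
  - exists c, b, a; repeat split; auto; constructor.
Qed.

Lemma spread_continuity z t : in_time T t -> continuity_2d_pt spread z t.
Proof.
  intros Ht.
  pose proof (in_time_strip eps T t z eps_pos Ht) as HP.
  destruct (positive z t Ht) as (_ & Pa & Pb & Pc).
  pose proof (min3_le_max3 (a z t) (b z t) (c z t)).
  pose proof (min3_pos _ _ _ Pa Pb Pc).
  assert (Hcont : forall f, smooth_on (strip eps T) f -> continuity_2d_pt f z t)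
    by (intros f Sf; exact (smooth_continuity_2d _ f nil z t Sf HP)).
  unfold spread, max3, min3 in *.
  apply continuity_2d_pt_minus; apply continuity_2d_pt_ln; try lra.
  - apply continuity_2d_pt_Rmax; [|apply continuity_2d_pt_Rmax]; auto.
  - apply continuity_2d_pt_Rmin; [|apply continuity_2d_pt_Rmin]; auto.
Qed.

Lemma spread_no_interior_max z t : 0 < t -> in_time T t -> 0 < spread z t ->
  (forall z' s, 0 <= s <= t -> spread z' s <= spread z t) -> False.
Proof.
  intros Ht0 Ht Hgt Hmax.
  destruct (positive z t Ht) as (_ & Pa & Pb & Pc).
  pose proof (min3_pos _ _ _ Pa Pb Pc) as Hm.
  pose proof (min3_le_max3 (a z t) (b z t) (c z t)).
  assert (Hlt : min3 (a z t) (b z t) (c z t) < max3 (a z t) (b z t) (c z t)).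
  { destruct (Rlt_or_le (min3 (a z t) (b z t) (c z t)) (max3 (a z t) (b z t) (c z t))) as [|Hle];
      auto.
    assert (HM : 0 < max3 (a z t) (b z t) (c z t)) by lra.
    unfold spread in Hgt. pose proof (ln_le _ _ HM Hle). lra. }
  destruct (perm3_extremes z t Hlt) as (f & g & h & Hp & HM & Hmin).
  destruct (perm3_between f g h z t Hp) as (_ & _ & [_ Hh]).
  apply (log_ratio_no_interior_max f g h z t Hp Ht0 Ht); [lra|lra|].
  intros z' s Hs.
  assert (Hs' : in_time T s) by (apply (in_time_le T t); auto).
  destruct (perm3_pos f g h z' s Hp Hs') as (_ & Pf & Pg & _).
  destruct (perm3_between f g h z' s Hp) as ([_ Hf] & [Hg _] & _).
  assert (Hm' : 0 < min3 (a z' s) (b z' s) (c z' s))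
    by (destruct (positive z' s Hs') as (_ & ? & ? & ?); apply min3_pos; auto).
  pose proof (ln_le _ _ Pf Hf). pose proof (ln_le _ _ Hm' Hg).
  specialize (Hmax z' s Hs). unfold spread in Hmax. rewrite HM, Hmin in Hmax. lra.
Qed.

Lemma pinching lam : 1 < lam ->
  (forall z, a z 0 <= b z 0 /\ b z 0 <= c z 0 /\ c z 0 <= lam * a z 0) ->
  forall z t, in_time T t ->
    max3 (a z t) (b z t) (c z t) <= lam * min3 (a z t) (b z t) (c z t).
Proof.
  intros Hlam Hinit z t Ht.
  assert (Hspread : spread z t <= ln lam).
  { apply (periodic_max_principle spread t (ln lam)); [apply Ht| | | |].
    - intros x y _ Hy. apply spread_continuity, (in_time_le T t); auto.
    - intros z' y Hy.
      destruct (periodic z' y (in_time_le T t y Ht Hy)) as (_ & Ea & Eb & Ec).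
      unfold spread. rewrite Ea, Eb, Ec. reflexivity.
    - intros z'. destruct (Hinit z') as (I1 & I2 & I3).
      destruct (positive z' 0 (in_time_le T t 0 Ht ltac:(split; [lra|apply Ht])))
        as (_ & Pa & Pb & Pc).
      unfold spread, max3, min3.
      replace (Rmax (a z' 0) (Rmax (b z' 0) (c z' 0))) with (c z' 0)
        by (unfold Rmax; repeat destruct Rle_dec; lra).
      replace (Rmin (a z' 0) (Rmin (b z' 0) (c z' 0))) with (a z' 0)
        by (unfold Rmin; repeat destruct Rle_dec; lra).
      pose proof (ln_le _ _ Pc I3) as Hln. rewrite ln_mult in Hln by lra. lra.
    - intros z' t' Ht' HL Hmax.
      assert (Hln : 0 < ln lam) by (rewrite <- ln_1; apply ln_increasing; lra).
      apply (spread_no_interior_max z' t'); [lra | | lra | exact Hmax].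
      apply (in_time_le T t); auto; lra. }
  destruct (positive z t Ht) as (_ & Pa & Pb & Pc).
  pose proof (min3_pos _ _ _ Pa Pb Pc) as Hm.
  destruct (Rle_or_lt (max3 (a z t) (b z t) (c z t)) (lam * min3 (a z t) (b z t) (c z t)))
    as [|Hgt]; auto.
  assert (Hlm : 0 < lam * min3 (a z t) (b z t) (c z t)) by nra.
  pose proof (ln_increasing _ _ Hlm Hgt) as Hln.
  unfold spread in Hspread. rewrite ln_mult in Hln by lra. lra.
Qed.

Lemma perm3_rate_explicit f g h z t : perm3 f g h -> in_time T t ->
  pt f z t =
    (pz (pz f) z t * phi z t - pz f z t * pz phi z t) / phi z t ^ 2 / phi z t
    + pz f z t / phi z t * (pz g z t / phi z t / g z t + pz h z t / phi z t / h z t)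
    - 2 * reaction (f z t) (g z t) (h z t).
Proof.
  intros Hp Ht. destruct (perm3_pos f g h z t Hp Ht) as (P0 & _).
  rewrite (perm3_evolves f g h z t Hp Ht), (dss_formula (strip eps T) phi f z t); auto.
  - apply (perm3_smooth f g h Hp).
  - apply in_time_strip; auto.
  - lra.
Qed.

Lemma ds_rate_critical f g h z t : perm3 f g h -> in_time T t ->
  pz (pz f) z t * phi z t = pz f z t * pz phi z t ->
  pt (ds phi f) z t =
    (pz (pz (pz f)) z t * phi z t - pz f z t * pz (pz phi) z t) / phi z t ^ 4
    - gradient_reaction (f z t) (g z t) (h z t) (ds phi f z t) (ds phi g z t) (ds phi h z t).
Proof.
  intros Hp Ht Hcrit.
  destruct (perm3_smooth f g h Hp) as (Sf & Sg & Sh).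
  assert (HP : forall z', strip eps T z' t) by (intro; apply in_time_strip; auto).
  destruct (perm3_pos f g h z t Hp Ht) as (P0 & Pf & Pg & Ph).
  assert (HR := fun z' => perm3_rate_explicit f g h z' t Hp Ht).
  replace (pt (ds phi f) z t) with ((pz (pt f) z t - ds phi f z t * pt phi z t) / phi z t)
    by (symmetry; apply is_derive_unique, (ds_is_derive_t eps T); auto; lra).
  unfold pz at 1. rewrite (Derive_ext _ _ z HR).
  pose proof (smooth_is_derive_z _ f (true :: true :: nil) z t Sf (HP z)) as F3.
  pose proof (smooth_is_derive_z _ f (true :: nil) z t Sf (HP z)) as F2.
  pose proof (smooth_is_derive_z _ f nil z t Sf (HP z)) as F1.
  pose proof (smooth_is_derive_z _ g (true :: nil) z t Sg (HP z)) as G2.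
  pose proof (smooth_is_derive_z _ g nil z t Sg (HP z)) as G1.
  pose proof (smooth_is_derive_z _ h (true :: nil) z t Sh (HP z)) as H2.
  pose proof (smooth_is_derive_z _ h nil z t Sh (HP z)) as H1.
  pose proof (smooth_is_derive_z _ phi (true :: nil) z t phi_smooth (HP z)) as E2.
  pose proof (smooth_is_derive_z _ phi nil z t phi_smooth (HP z)) as E1.
  simpl in F3, F2, F1, G2, G1, H2, H1, E2, E1.
  (* [auto_derive] instantiates the derivative left open by [erewrite]. *)
  erewrite is_derive_unique; cycle 1.
  { unfold reaction. auto_derive; [|reflexivity].
    repeat split; try (eexists; eassumption);
      repeat apply Rmult_integral_contrapositive_currified; lra. }
  rewrite (is_derive_unique _ _ _ F3), (is_derive_unique _ _ _ F2), (is_derive_unique _ _ _ F1),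
    (is_derive_unique _ _ _ G2), (is_derive_unique _ _ _ G1), (is_derive_unique _ _ _ H2),
    (is_derive_unique _ _ _ H1), (is_derive_unique _ _ _ E2), (is_derive_unique _ _ _ E1).
  rewrite (perm3_phi_rate f g h z t Hp Ht), (dss_formula (strip eps T) phi f z t),
    (dss_formula (strip eps T) phi g z t), (dss_formula (strip eps T) phi h z t) by (auto; lra).
  replace (pz (pz f) z t) with (pz f z t * pz phi z t / phi z t) by (rewrite <- Hcrit; field; lra).
  unfold gradient_reaction, reaction_dx, reaction_dy, ds.
  field. repeat split; lra.
Qed.

Lemma ds_no_interior_max sg f g h z t : perm3 f g h -> (sg = 1 \/ sg = -1) ->
  0 < t -> in_time T t -> ratios_lt2 (f z t) (g z t) (h z t) -> 10 < sg * ds phi f z t ->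
  (forall z' s, 0 <= s <= t -> sg * ds phi f z' s <= sg * ds phi f z t) -> False.
Proof.
  intros Hp Hsg Ht0 Ht Hrat HX Hmax.
  destruct (perm3_smooth f g h Hp) as (Sf & _ & _).
  assert (HP : forall z', strip eps T z' t) by (intro; apply in_time_strip; auto).
  assert (Hphi : forall z', phi z' t <> 0)
    by (intro z'; destruct (perm3_pos f g h z' t Hp Ht); lra).
  destruct (perm3_pos f g h z t Hp Ht) as (P0 & Pf & Pg & Ph).
  set (X1 := fun z' => (pz (pz f) z' t * phi z' t - pz f z' t * pz phi z' t) / phi z' t ^ 2).
  set (X2 := fun z' =>
    ((pz (pz (pz f)) z' t * phi z' t - pz f z' t * pz (pz phi) z' t) * phi z' t
      - 2 * (pz (pz f) z' t * phi z' t - pz f z' t * pz phi z' t) * pz phi z' t) / phi z' t ^ 3).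
  destruct (is_derive_global_max (fun z' => sg * ds phi f z' t) (fun z' => sg * X1 z')
              (fun z' => sg * X2 z') z) as [Hcrit Hconc].
  { intro x. exact (is_derive_scal _ x sg _
      (ds_is_derive_z (strip eps T) phi f x t phi_smooth Sf (HP x) (Hphi x))). }
  { intro x. exact (is_derive_scal _ x sg _
      (ds_is_derive_zz (strip eps T) phi f x t phi_smooth Sf HP (Hphi x))). }
  { intro x. apply Hmax. lra. }
  assert (Hcrit' : pz (pz f) z t * phi z t = pz f z t * pz phi z t).
  { assert (X1 z = 0) as E by (destruct Hsg as [-> | ->]; lra).
    unfold X1 in E. apply Rminus_diag_uniq.
    apply (Rmult_eq_reg_r (/ phi z t ^ 2)); [lra|].
    apply Rinv_neq_0_compat, pow_nonzero; lra. }
  assert (Hrate : 0 <= sg * pt (ds phi f) z t).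
  { apply (is_derive_right_max (fun s => sg * ds phi f z s) t); auto.
    apply is_derive_scal, Derive_correct.
    eexists. apply (ds_is_derive_t eps T); auto. }
  rewrite (ds_rate_critical f g h z t Hp Ht Hcrit') in Hrate.
  pose proof (gradient_reaction_signed_pos sg (f z t) (g z t) (h z t) (ds phi f z t)
                (ds phi g z t) (ds phi h z t) Hsg Pf Pg Ph Hrat HX).
  assert (sg * ((pz (pz (pz f)) z t * phi z t - pz f z t * pz (pz phi) z t) / phi z t ^ 4) <= 0).
  { replace (sg * ((pz (pz (pz f)) z t * phi z t - pz f z t * pz (pz phi) z t) / phi z t ^ 4))
      with (sg * X2 z * / phi z t ^ 2) by (unfold X2; rewrite Hcrit'; field; lra).
    apply Rmult_le_0_r; auto. left; apply Rinv_0_lt_compat, pow_lt; lra. }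
  lra.
Qed.

Lemma ds_periodic f g h z t : perm3 f g h -> in_time T t ->
  ds phi f (z + 2 * PI) t = ds phi f z t.
Proof.
  intros Hp Ht. destruct (perm3_smooth f g h Hp) as (Sf & _ & _).
  assert (HP : forall z', strip eps T z' t) by (intro; apply in_time_strip; auto).
  unfold ds. rewrite (pz_periodic _ f z t Sf HP).
  - rewrite (proj1 (periodic z t Ht)). reflexivity.
  - intro z'. apply (perm3_periodic f g h z' t Hp Ht).
Qed.

Lemma gradient_bound sg f g h L : perm3 f g h -> (sg = 1 \/ sg = -1) ->
  (forall z t, in_time T t -> ratios_lt2 (f z t) (g z t) (h z t)) ->
  10 <= L -> (forall z, sg * ds phi f z 0 <= L) ->
  forall z t, in_time T t -> sg * ds phi f z t <= L.
Proof.
  intros Hp Hsg Hrat HL H0 z t Ht.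
  destruct (perm3_smooth f g h Hp) as (Sf & _ & _).
  apply (periodic_max_principle (fun z s => sg * ds phi f z s) t L); [apply Ht| | |exact H0|].
  - intros x y _ Hy. assert (Hy' : in_time T y) by (apply (in_time_le T t); auto).
    apply (continuity_2d_pt_mult (fun _ _ => sg)); [apply continuity_2d_pt_const|].
    apply (ds_continuity_2d (strip eps T)); auto.
    + apply in_time_strip; auto.
    + apply (positive x y Hy').
  - intros z' y Hy. rewrite (ds_periodic f g h z' y Hp); auto.
    apply (in_time_le T t); auto.
  - intros z' t' Ht' HLt Hmax.
    assert (Hin : in_time T t') by (apply (in_time_le T t); auto; lra).
    apply (ds_no_interior_max sg f g h z' t'); auto; lra.
Qed.

Lemma gradient_abs_bound f g h L : perm3 f g h ->
  (forall z t, in_time T t -> ratios_lt2 (f z t) (g z t) (h z t)) ->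
  10 <= L -> (forall z, Rabs (ds phi f z 0) <= L) ->
  forall z t, in_time T t -> Rabs (ds phi f z t) <= L.
Proof.
  intros Hp Hrat HL H0 z t Ht.
  assert (Hsigned : forall sg, sg = 1 \/ sg = -1 -> sg * ds phi f z t <= L).
  { intros sg Hsg. apply (gradient_bound sg f g h); auto.
    intro z'. specialize (H0 z').
    destruct Hsg as [-> | ->];
      [pose proof (Rle_abs (ds phi f z' 0)) | pose proof (Rabs_maj2 (ds phi f z' 0))]; lra. }
  pose proof (Hsigned 1 (or_introl eq_refl)). pose proof (Hsigned (-1) (or_intror eq_refl)).
  apply Rabs_le. lra.
Qed.

Lemma ds_initial_max f g h : perm3 f g h -> in_time T 0 ->
  exists z0, forall z, Rabs (ds phi f z 0) <= Rabs (ds phi f z0 0).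
Proof.
  intros Hp H0.
  destruct (perm3_smooth f g h Hp) as (Sf & _ & _).
  destruct (continuity_ab_maj (fun z => Rabs (ds phi f z 0)) 0 (2 * PI)) as [z0 [Hz0 _]].
  - pose proof PI_RGT_0. lra.
  - intros x _. apply (continuity_2d_pt_fst (fun u v => Rabs (ds phi f u v))).
    apply (continuity_1d_2d_pt_comp Rabs); [apply Rcontinuity_abs|].
    apply (ds_continuity_2d (strip eps T)); auto.
    + apply in_time_strip; auto.
    + apply (positive x 0 H0).
  - exists z0. intro z.
    destruct (periodic_repr (fun u => Rabs (ds phi f u 0))) with (z := z) as [x [Hx ->]].
    + intro u. rewrite (ds_periodic f g h u 0 Hp H0). reflexivity.
    + apply Hz0; auto.
Qed.

Lemma gradient_estimate f g h : perm3 f g h -> Rbar_lt 0 T ->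
  (forall z t, in_time T t -> ratios_lt2 (f z t) (g z t) (h z t)) ->
  exists C, 10 <= C /\ (forall z t, in_time T t -> Rabs (ds phi f z t) <= C) /\
    le_max_init C 10 phi f.
Proof.
  intros Hp HT Hrat.
  assert (H0 : in_time T 0) by (split; [lra|exact HT]).
  destruct (ds_initial_max f g h Hp H0) as [z0 Hz0].
  exists (Rmax 10 (Rabs (ds phi f z0 0))).
  split; [apply Rmax_l|]. split.
  - apply (gradient_abs_bound f g h); auto; [apply Rmax_l|].
    intro z. eapply Rle_trans; [apply Hz0|apply Rmax_r].
  - unfold le_max_init, Rmax. destruct Rle_dec; [right; exists z0|left]; lra.
Qed.

Lemma pinched_derivative_bounds lam : 1 < lam < 2 -> Rbar_lt 0 T ->
  (forall z, a z 0 <= b z 0 /\ b z 0 <= c z 0 /\ c z 0 <= lam * a z 0) ->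
  exists C1 C2 C3, 10 <= C1 /\ 10 <= C2 /\ 10 <= C3 /\
    (forall z t, in_time T t ->
       Rabs (ds phi a z t) <= C1 /\ Rabs (ds phi b z t) <= C2 /\ Rabs (ds phi c z t) <= C3) /\
    le_max_init C1 10 phi a /\ le_max_init C2 10 phi b /\ le_max_init C3 10 phi c.
Proof.
  intros [Hl1 Hl2] HT Hinit.
  assert (Hrat : forall z t, in_time T t -> ratios_lt2 (a z t) (b z t) (c z t)).
  { intros z t Ht. destruct (positive z t Ht) as (_ & Pa & Pb & Pc).
    apply (max3_lt2 _ _ _ lam); auto. apply (pinching lam); auto. }
  destruct (gradient_estimate a b c perm3_abc HT) as (C1 & ? & B1 & ?).
  { intros; apply (perm3_ratios a b c); auto; constructor. }
  destruct (gradient_estimate b a c perm3_bac HT) as (C2 & ? & B2 & ?).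
  { intros; apply (perm3_ratios b a c); auto; constructor. }
  destruct (gradient_estimate c a b perm3_cab HT) as (C3 & ? & B3 & ?).
  { intros; apply (perm3_ratios c a b); auto; constructor. }
  exists C1, C2, C3. repeat split; auto.
Qed.

End RicciFlowSolution.

Lemma le_max_init_weaken C K K' phi f : K <= K' -> le_max_init C K phi f -> le_max_init C K' phi f.
Proof. intros HK [HC|HC]; [left; lra|right; exact HC]. Qed.

Lemma sqrt_ge_of_square x y : 0 <= x -> x * x <= y -> x <= sqrt y.
Proof. intros Hx Hy. rewrite <- (sqrt_square x Hx). apply sqrt_le_1_alt, Hy. Qed.

Theorem lemma4p7 (phi a b c : R -> R -> R) (T : Rbar) (lambda : R) :
  RF_maximal phi a b c T ->
  1 < lambda < 2 ->
  (forall z, a z 0 <= b z 0 /\ b z 0 <= c z 0 /\ c z 0 <= lambda * a z 0) ->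
  exists C1 C2 C3 : R,
    0 < C1 /\ 0 < C2 /\ 0 < C3 /\
    (forall z t, in_time T t ->
       Rabs (ds phi a z t) <= C1 /\
       Rabs (ds phi b z t) <= C2 /\
       Rabs (ds phi c z t) <= C3) /\
    le_max_init C1 (280 * sqrt 3 / 9) phi a /\
    le_max_init C2 (4 * sqrt 57 / 3) phi b /\
    le_max_init C3 (10 * sqrt 93 / 9) phi c.
Proof.
  intros [(HT & (eps & He & Sphi & Sa & Sb & Sc) & Hper & Hpos & Hflow) _] Hlam Hinit.
  destruct (pinched_derivative_bounds eps T phi a b c He Sphi Sa Sb Sc Hper Hpos Hflow
              lambda Hlam HT Hinit)
    as (C1 & C2 & C3 & H1 & H2 & H3 & Hbounds & I1 & I2 & I3).
  pose proof (sqrt_ge_of_square 1 3 ltac:(lra) ltac:(lra)).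
  pose proof (sqrt_ge_of_square 7.5 57 ltac:(lra) ltac:(lra)).
  pose proof (sqrt_ge_of_square 9 93 ltac:(lra) ltac:(lra)).
  exists C1, C2, C3.
  split; [lra|]. split; [lra|]. split; [lra|]. split; [exact Hbounds|].
  split; [|split]; eapply le_max_init_weaken; eauto; lra.
Qed.
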